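(* Consider a single context with design set $\mathcal D=\mathcal P\sqcup\mathcal U$. Each design $d$ is Gaussian with mean $\mu^*_d$ and known variance $(\sigma^*_d)^2>0$, all means are distinct, and every mean in $\mathcal P$ exceeds every mean in $\mathcal U$. For $d\in\mathcal P$, $d'\in\mathcal U$ let $$G_{d,d'}(x,y)=\frac{(\mu^*_d-\mu^*_{d'})^2}{(\sigma^*_d)^2/x+(\sigma^*_{d'})^2/y}.$$ Consider the problem of maximizing $\min_{d\in\mathcal P,\,d'\in\mathcal U}G_{d,d'}(\psi(d),\psi(d'))$ over $\psi\ge0$ with $\sum_{d\in\mathcal D}\psi(d)=1$. A feasible $\psi$ is optimal only if there exist $z>0$ and a type $\vartheta\in\{0,1\}^{\mathcal P\times\mathcal U}$ with the following properties: - $\max_{\tilde d\in\mathcal P}\vartheta(\tilde d,d')=1$ for all $d'\in\mathcal U$, and $\max_{\tilde d'\in\mathcal U}\vartheta(d,\tilde d')=1$ for all $d\in\mathcal P$; - for each equivalence class $\mathcal D^l$ ($l=1,\dots,L$) of $\overset{\vartheta}{\sim}$, with $\mathcal P^l=\mathcal D^l\cap\mathcal P$ and $\mathcal U^l=\mathcal D^l\cap\mathcal U$, $$\sum_{d\in\mathcal P^l}\Big(\frac{\psi(d)}{\sigma^*_d}\Big)^2=\sum_{d'\in\mathcal U^l}\Big(\frac{\psi(d')}{\sigma^*_{d'}}\Big)^2;$$ - for all $d\in\mathcal P$, $d'\in\mathcal U$ we have $G_{d,d'}(\psi(d),\psi(d'))\ge z$, with equality if and only if $\vartheta(d,d')=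1$.
   Context: Equivalence relation. Given $\vartheta\in\{0,1\}^{\mathcal P\times\mathcal U}$, the relation $\overset{\vartheta}{\sim}$ on $\mathcal D$ is defined by $\tilde d\overset{\vartheta}{\sim}\bar d$ if there is a chain $(d_1,d_1'),\dots,(d_n,d_n')\in\mathcal P\times\mathcal U$ such that: - $\vartheta(d_i,d_i')=1$ for all $i$; - for each $i<n$, either $d_i=d_{i+1}$ or $d_i'=d_{i+1}'$; - $\tilde d\in\{d_1,d_1'\}$ and $\bar d\in\{d_n,d_n'\}$. This relation partitions $\mathcal D$ into equivalence classes $\mathcal D^1,\dots,\mathcal D^L$. *)

From HB Require Import structures.
From mathcomp Require Import all_boot all_order all_algebra.
From mathcomp Require Import boolp reals.
Set Implicit Arguments. Unset Strict Implicit. Unset Printing Implicit Defensive.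
Import Order.TTheory GRing.Theory Num.Theory.
Local Open Scope ring_scope.

(* G_{d,d'}(x,y) = (mu d - mu d')^2 / (sigma_d^2/x + sigma_d'^2/y),
   with the convention sigma^2/0 = +oo, i.e. G = 0 whenever x = 0 or y = 0. *)
Definition Gfun (R : realType) (P U : finType) (mu sigma : P + U -> R)
  (p : P) (u : U) (x y : R) : R :=
  if (0 < x) && (0 < y) then
    (mu (inl p) - mu (inr u)) ^+ 2 /
      (sigma (inl p) ^+ 2 / x + sigma (inr u) ^+ 2 / y)
  else 0.

Definition feasible (R : realType) (P U : finType) (psi : P + U -> R) : Prop :=
  (forall d, 0 <= psi d) /\ \sum_(d : P + U) psi d = 1.

(* min_{p,u} G(phi) <= min_{p,u} G(psi): some pair for phi is below every pair for psi *)
Definition objective_le (R : realType) (P U : finType) (mu sigma : P + U -> R)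
  (phi psi : P + U -> R) : Prop :=
  exists (p : P) (u : U), forall (p' : P) (u' : U),
    Gfun mu sigma p u (phi (inl p)) (phi (inr u))
      <= Gfun mu sigma p' u' (psi (inl p')) (psi (inr u')).

Definition optimal (R : realType) (P U : finType) (mu sigma : P + U -> R)
  (psi : P + U -> R) : Prop :=
  feasible psi /\ forall phi, feasible phi -> objective_le mu sigma phi psi.

Definition chain_step (P U : finType) (a b : P * U) : bool :=
  (a.1 == b.1) || (a.2 == b.2).

Definition in_pair (P U : finType) (d : P + U) (a : P * U) : bool :=
  (d == inl a.1) || (d == inr a.2).

Definition theta_rel (P U : finType) (theta : P -> U -> bool)
  (d1 d2 : P + U) : Prop :=
  exists (a : P * U) (s : seq (P * U)),
    all (fun b => theta b.1 b.2) (a :: s) /\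
    path (@chain_step P U) a s /\
    in_pair d1 a /\ in_pair d2 (last a s).

Definition theta_relb (P U : finType) (theta : P -> U -> bool)
  (d1 d2 : P + U) : bool := `[< theta_rel theta d1 d2 >].

From HB Require Import structures.
From mathcomp Require Import all_boot all_order all_algebra.
From mathcomp Require Import reals boolp ring lra.
Import Order.TTheory GRing.Theory Num.Theory.
Set Implicit Arguments. Unset Strict Implicit. Unset Printing Implicit Defensive.
Local Open Scope ring_scope.

(* Write w_d = sigma_d^2 / psi_d for the "precision weight" of design d, so that
   G_{p,u}(psi) = (mu_p - mu_u)^2 / (w_p + w_u), and let z be the optimal value,
   attained at some pair.  The heart of the proof is a first-order condition
   (first_order_condition): if a direction e with |e| <= 1 satisfies
   e_p + e_u <= 0 on every tight pair (G_{p,u} = z), then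
   sum_d e_d (psi_d / sigma_d)^2 <= 0.  Otherwise, moving the weights to
   w + t e for a small t > 0 keeps every pair at level >= z while the budget
   sum_d sigma_d^2 / (w_d + t e_d) drops strictly below 1 (a second-order
   Taylor bound, inv_shift_le), and rescaling gives an allocation strictly
   better than psi (reallocation).  The theorem then follows with theta the
   tight-pair indicator: indicator directions show every design lies in a
   tight pair (tight_cover), and the directions +-(1_{U-class} - 1_{P-class})
   of an equivalence class give the balance equation (class_balance). *)

Lemma inv_shift_le (R : realFieldType) (a w x t : R) :
  0 < a -> 0 < w -> `|x| <= t -> t <= w / 2 ->
  a / (w + x) <= a / w - x * (a / w ^+ 2) + t ^+ 2 * (2 * a / w ^+ 3).
Proof.
move=> a_gt0 w_gt0 /[!ler_norml] /andP[xlo xhi] t_le.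
have wx_ge : w / 2 <= w + x by lra.
have wx_gt0 : 0 < w + x by lra.
have w2_gt0 : 0 < w ^+ 2 by rewrite exprn_gt0.
have -> : a / (w + x) = a / w - x * (a / w ^+ 2) + a * x ^+ 2 / (w ^+ 2 * (w + x)).
  by field; rewrite !gt_eqF.
have -> : t ^+ 2 * (2 * a / w ^+ 3) = a * t ^+ 2 / (w ^+ 2 * (w / 2)).
  by field; rewrite gt_eqF.
have x2_le : x ^+ 2 <= t ^+ 2 by nra.
rewrite lerD2l ler_pM //.
- by rewrite mulr_ge0 ?sqr_ge0 // ltW.
- by rewrite invr_ge0 ltW // mulr_gt0.
- by rewrite ler_pM2l.
- by rewrite lef_pV2 ?posrE ?mulr_gt0 ?ler_pM2l //; lra.
Qed.

Lemma exists_pos_lower_bound (R : realDomainType) (I : finType) (f : I -> R) :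
  (forall i, 0 < f i) -> exists2 t, 0 < t & forall i, t <= f i.
Proof.
move=> f_gt0.
suff [t t_gt0 tP] : exists2 t : R, 0 < t & forall i, i \in enum I -> t <= f i.
  by exists t => // i; apply: tP; rewrite mem_enum.
elim: (enum I) => [|j s [t t_gt0 tP]]; first by exists 1.
exists (Num.min t (f j)); first by rewrite lt_min t_gt0 f_gt0.
by move=> i /[!inE] /orP[/eqP ->|/tP]; rewrite ge_min ?lexx ?orbT // => ->.
Qed.

Lemma GfunE (R : realType) (P U : finType) (mu sigma : P + U -> R) p u x y :
  0 < x -> 0 < y -> Gfun mu sigma p u x y =
  (mu (inl p) - mu (inr u)) ^+ 2 / (sigma (inl p) ^+ 2 / x + sigma (inr u) ^+ 2 / y).
Proof. by move=> x_gt0 y_gt0; rewrite /Gfun x_gt0 y_gt0. Qed.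

Lemma Gfun_degenerate (R : realType) (P U : finType) (mu sigma : P + U -> R) p u x y :
  ~~ (0 < x) || ~~ (0 < y) -> Gfun mu sigma p u x y = 0.
Proof. by rewrite -negb_and /Gfun => /negbTE ->. Qed.

Lemma theta_relb_edge (P U : finType) (theta : P -> U -> bool) d0 p u :
  theta p u -> theta_relb theta d0 (inl p) = theta_relb theta d0 (inr u).
Proof.
move=> theta_pu; apply: asbool_equiv_eq.
suff extend d1 d2 : in_pair d1 (p, u) -> in_pair d2 (p, u) ->
    theta_rel theta d0 d1 -> theta_rel theta d0 d2.
  by split; apply: extend; rewrite /in_pair eqxx ?orbT.
move=> in1 in2 [a [s [all_s [path_s [in0 in_last]]]]].
exists a, (rcons s (p, u)); split; first by rewrite -rcons_cons all_rcons all_s theta_pu.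
split; last by rewrite last_rcons.
rewrite rcons_path path_s /chain_step /=.
move: in_last in1; rewrite /in_pair.
by case: d1 => [x|x] /orP[]/eqP[] // <- /orP[]/eqP[] // ->; rewrite eqxx ?orbT.
Qed.

Lemma sum_indicator (R : pzSemiRingType) (I : finType) (a : pred I) (f : I -> R) :
  \sum_i (a i)%:R * f i = \sum_(i | a i) f i.
Proof.
by rewrite [RHS]big_mkcond; apply: eq_bigr => i _; case: (a i); rewrite ?mul1r ?mul0r.
Qed.

Section OptimalAllocation.

Variables (R : realType) (P U : finType) (mu sigma : P + U -> R).
Hypothesis sigma_gt0 : forall d, 0 < sigma d.
Hypothesis mu_inj : injective mu.
Variable psi : P + U -> R.
Hypothesis psi_opt : optimal mu sigma psi.

Local Notation G p u := (Gfun mu sigma p u (psi (inl p)) (psi (inr u))).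

Variables (p0 : P) (u0 : U).
Hypothesis G_min : forall p u, G p0 u0 <= G p u.
Local Notation z := (G p0 u0).

(* Squared mean gap, precision weights, and the budget consumed by weights v
   (the total allocation sum_d sigma_d^2 / v_d they correspond to). *)
Let gap p u := (mu (inl p) - mu (inr u)) ^+ 2.
Let w d := sigma d ^+ 2 / psi d.
Let mass (v : P + U -> R) := \sum_d sigma d ^+ 2 / v d.

Lemma gap_gt0 p u : 0 < gap p u.
Proof.
rewrite lt_neqAle sqr_ge0 andbT eq_sym sqrf_eq0 subr_eq0.
by apply/eqP => /mu_inj.
Qed.

(* The optimal value is positive: it beats the uniform allocation. *)
Lemma min_value_gt0 : 0 < z.
Proof.
pose n : R := #|{: P + U}|%:R.
have n_gt0 : 0 < n by rewrite ltr0n; apply/card_gt0P; exists (inl p0).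
have unif_feas : feasible (fun _ : P + U => n^-1).
  split=> [d|]; first by rewrite invr_ge0 ltW.
  by rewrite sumr_const -[_ *+ _]mulr_natr mulVf ?gt_eqF.
have [p [u le_pu]] := psi_opt.2 _ unif_feas.
apply: lt_le_trans (le_pu p0 u0).
rewrite GfunE ?invr_gt0 // divr_gt0 //; first exact: gap_gt0.
by rewrite addr_gt0 // divr_gt0 ?exprn_gt0 ?invr_gt0.
Qed.

(* An optimal allocation charges every design, otherwise some pair has G = 0. *)
Lemma psi_gt0 d : 0 < psi d.
Proof.
have z_gt0 : 0 < z := min_value_gt0.
case: d => [p|u]; rewrite ltNge; apply/negP => psi_le0.
- have := G_min p u0; rewrite [G p u0]Gfun_degenerate -?leNgt ?psi_le0 //; lra.
- have := G_min p0 u; rewrite [G p0 u]Gfun_degenerate -?leNgt ?psi_le0 ?orbT //; lra.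
Qed.

Lemma w_gt0 d : 0 < w d.
Proof. by rewrite divr_gt0 ?exprn_gt0 ?psi_gt0. Qed.

Lemma G_weights p u : G p u = gap p u / (w (inl p) + w (inr u)).
Proof. by rewrite GfunE ?psi_gt0. Qed.

(* No weights v can use budget < 1 while keeping every pair at level >= z:
   rescaling them to budget 1 would beat psi on every pair. *)
Lemma reallocation (v : P + U -> R) : (forall d, 0 < v d) -> mass v < 1 ->
  (forall p u, z * (v (inl p) + v (inr u)) <= gap p u) -> False.
Proof.
move=> v_gt0 mass_lt1 gap_ge.
have z_gt0 : 0 < z := min_value_gt0.
set S := mass v in mass_lt1.
have S_gt0 : 0 < S.
  rewrite /S /mass (bigD1 (inl p0)) //= ltr_pwDl ?divr_gt0 ?exprn_gt0 //.
  by rewrite sumr_ge0 // => d _; rewrite ltW // divr_gt0 ?exprn_gt0.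
pose phi d := sigma d ^+ 2 / v d / S.
have phi_gt0 d : 0 < phi d by rewrite !divr_gt0 ?exprn_gt0.
have phi_feas : feasible phi.
  by split=> [d|]; [exact: ltW | rewrite -mulr_suml divff ?gt_eqF].
have [p [u le_pu]] := psi_opt.2 phi phi_feas.
have := le_pu p0 u0; rewrite GfunE //.
have inv_phi d : sigma d ^+ 2 / phi d = S * v d.
  by rewrite /phi; field; rewrite !gt_eqF.
rewrite !inv_phi -mulrDr.
have W_gt0 : 0 < v (inl p) + v (inr u) by rewrite addr_gt0.
rewrite ler_pdivrMr ?mulr_gt0 // => gap_le.
have shrink : S * (v (inl p) + v (inr u)) < v (inl p) + v (inr u) by rewrite gtr_pMl.
move: (gap_ge p u) z_gt0; rewrite /gap => ? ?; nra.
Qed.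

(* Curvature constant of the budget in the second-order bound. *)
Let K := \sum_d 2 * sigma d ^+ 2 / w d ^+ 3.

Lemma K_ge0 : 0 <= K.
Proof.
by apply: sumr_ge0 => d _; rewrite ltW // !mulr_gt0 ?invr_gt0 ?exprn_gt0 ?w_gt0.
Qed.

Lemma perturbed_mass_le (e : P + U -> R) (t : R) :
  (forall d, `|e d| <= 1) -> 0 < t -> (forall d, t <= w d / 2) ->
  mass (fun d => w d + t * e d)
    <= 1 - t * \sum_d e d * (psi d / sigma d) ^+ 2 + t ^+ 2 * K.
Proof.
move=> e_le1 t_gt0 t_le_w.
have te_le d : `|t * e d| <= t by rewrite normrM gtr0_norm // ler_piMr // ltW.
have psiE d : sigma d ^+ 2 / w d = psi d.
  by rewrite /w; field; rewrite !gt_eqF ?psi_gt0.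
have psi2E d : sigma d ^+ 2 / w d ^+ 2 = (psi d / sigma d) ^+ 2.
  by rewrite /w; field; rewrite !gt_eqF ?psi_gt0.
have term_le d : sigma d ^+ 2 / (w d + t * e d) <= psi d
    - t * e d * (psi d / sigma d) ^+ 2 + t ^+ 2 * (2 * sigma d ^+ 2 / w d ^+ 3).
  by rewrite -psi2E -psiE inv_shift_le ?exprn_gt0 ?w_gt0.
rewrite /mass (le_trans (ler_sum _ (fun d _ => term_le d))) //.
rewrite !big_split /= sumrN -!mulr_sumr.
under [X in _ - X]eq_bigr do rewrite -mulrA.
rewrite -mulr_sumr.
by case: psi_opt => -[_ ->] _.
Qed.

Lemma slack_gt0 p u : G p u != z -> 0 < gap p u - z * (w (inl p) + w (inr u)).
Proof.
move=> not_tight; have W_gt0 : 0 < w (inl p) + w (inr u) by rewrite addr_gt0 ?w_gt0.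
have : z < G p u by rewrite lt_neqAle eq_sym not_tight G_min.
by rewrite (G_weights p u) ltr_pdivlMr // subr_gt0.
Qed.

(* A step size small enough for the perturbation argument: it keeps weights
   positive, makes the budget decrease, and stays within every slack. *)
Lemma small_step (s : R) : 0 < s -> exists2 t, 0 < t &
  [/\ forall d, t <= w d / 2, t * (K + 1) <= s &
      forall p u, G p u != z -> 2 * z * t <= gap p u - z * (w (inl p) + w (inr u))].
Proof.
move=> s_gt0; have z_gt0 : 0 < z := min_value_gt0.
have [t1 t1_gt0 t1_le] := @exists_pos_lower_bound _ _ (fun d => w d / 2)
  (fun d => divr_gt0 (w_gt0 d) (ltr0Sn _ 1)).
pose margin (a : P * U) :=
  if G a.1 a.2 == z then 1
  else (gap a.1 a.2 - z * (w (inl a.1) + w (inr a.2))) / (2 * z).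
have [t2 t2_gt0 t2_le] : exists2 t2, 0 < t2 & forall a, t2 <= margin a.
  apply: exists_pos_lower_bound => -[p u]; rewrite /margin /=.
  by case: eqP => [//|/eqP/slack_gt0 ?]; rewrite divr_gt0 ?mulr_gt0.
have K1_gt0 : 0 < K + 1 by rewrite ltr_wpDl ?K_ge0.
exists (Num.min t1 (Num.min t2 (s / (K + 1)))).
  by rewrite !lt_min t1_gt0 t2_gt0 divr_gt0.
split=> [d | | p u not_tight].
- by rewrite ge_min t1_le.
- by rewrite -ler_pdivlMr // !ge_min lexx !orbT.
- have := t2_le (p, u); rewrite /margin /= (negbTE not_tight).
  rewrite ler_pdivlMr ?mulr_gt0 // => t2_le_pu.
  by rewrite mulrC (le_trans _ t2_le_pu) // ler_pM2r ?mulr_gt0 // !ge_min lexx !orbT.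
Qed.

Lemma first_order_condition (e : P + U -> R) :
  (forall d, `|e d| <= 1) ->
  (forall p u, G p u = z -> e (inl p) + e (inr u) <= 0) ->
  \sum_d e d * (psi d / sigma d) ^+ 2 <= 0.
Proof.
move=> e_le1 e_tight; rewrite leNgt; apply/negP => s_gt0.
have z_gt0 : 0 < z := min_value_gt0.
have [t t_gt0 [t_le_w t_le_s t_le_gap]] := small_step s_gt0.
have e_bounds d : - 1 <= e d <= 1 by rewrite -ler_norml.
apply: (@reallocation (fun d => w d + t * e d)).
- move=> d; have := t_le_w d; have := w_gt0 d; have /andP[? ?] := e_bounds d; nra.
- apply: (le_lt_trans (perturbed_mass_le e_le1 t_gt0 t_le_w)).
  have := K_ge0; nra.
- move=> p u; have /andP[? ?] := e_bounds (inl p); have /andP[? ?] := e_bounds (inr u).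
  have [tight|not_tight] := eqVneq (G p u) z.
  + have gapE : gap p u = z * (w (inl p) + w (inr u)).
      by rewrite -tight (G_weights p u) divfK // gt_eqF // addr_gt0 ?w_gt0.
    have : 0 <= z * t * - (e (inl p) + e (inr u)).
      by rewrite mulr_ge0 ?oppr_ge0 ?e_tight // mulr_ge0 // ltW.
    rewrite gapE; lra.
  + have : z * t * (e (inl p) + e (inr u)) <= z * t * 2.
      by rewrite ler_pM2l ?mulr_gt0 //; lra.
    have := t_le_gap _ _ not_tight; lra.
Qed.

(* Every design belongs to a tight pair: otherwise its indicator would be an
   admissible direction with positive first-order gain. *)
Lemma tight_cover d : exists p u, G p u = z /\ in_pair d (p, u).
Proof.
case: (pselect (exists p u, G p u = z /\ in_pair d (p, u))) => // no_pair.
pose e d' : R := (d' == d)%:R.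
have e_le1 d' : `|e d'| <= 1 by rewrite /e; case: eqP; rewrite ?normr1 ?normr0.
have e_tight p u : G p u = z -> e (inl p) + e (inr u) <= 0.
  move=> tight; rewrite /e.
  have [dl|_] := eqVneq (inl p) d.
    by case: no_pair; exists p, u; rewrite -dl /in_pair eqxx.
  have [dr|_] := eqVneq (inr u) d.
    by case: no_pair; exists p, u; rewrite -dr /in_pair eqxx orbT.
  by rewrite addr0.
have := first_order_condition e_le1 e_tight.
rewrite (bigD1 d) //= big1 => [|d' /negbTE d'_neq]; last by rewrite /e d'_neq mul0r.
by rewrite /e eqxx mul1r addr0 leNgt exprn_gt0 ?divr_gt0 ?psi_gt0.
Qed.

Local Notation tight := (fun p u => G p u == z).

(* In each class of the tight-pair relation, the P- and U-sides carry the same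
   weighted mass (apply the first-order condition to +-(1_U - 1_P)). *)
Lemma class_balance d0 :
  \sum_(p | theta_relb tight d0 (inl p)) (psi (inl p) / sigma (inl p)) ^+ 2
  = \sum_(u | theta_relb tight d0 (inr u)) (psi (inr u) / sigma (inr u)) ^+ 2.
Proof.
set A := fun p => theta_relb tight d0 (inl p).
set B := fun u => theta_relb tight d0 (inr u).
pose e (c : R) (d : P + U) : R :=
  match d with inl p => - c * (A p)%:R | inr u => c * (B u)%:R end.
have sumE c : \sum_d e c d * (psi d / sigma d) ^+ 2 =
    c * (\sum_(u | B u) (psi (inr u) / sigma (inr u)) ^+ 2
         - \sum_(p | A p) (psi (inl p) / sigma (inl p)) ^+ 2).
  rewrite big_sumType /=.
  under eq_bigr do rewrite -mulrA.
  under [X in _ + X]eq_bigr do rewrite -mulrA.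
  by rewrite -!mulr_sumr !sum_indicator mulNr mulrBr addrC.
have signed_le0 c : `|c| <= 1 ->
    c * (\sum_(u | B u) (psi (inr u) / sigma (inr u)) ^+ 2
         - \sum_(p | A p) (psi (inl p) / sigma (inl p)) ^+ 2) <= 0.
  move=> c_le1; rewrite -sumE; apply: first_order_condition.
  - by case=> [p|u] /=; rewrite normrM ?normrN;
      [case: (A p) | case: (B u)]; rewrite ?normr1 ?normr0 ?mulr1 ?mulr0 ?ler01.
  - move=> p u tight_pu /=; rewrite /A /B (@theta_relb_edge _ _ tight d0 p u).
      by rewrite mulNr addNr.
    exact/eqP.
have := signed_le0 1; have := signed_le0 (-1).
rewrite normrN normr1 lexx => /(_ isT) le_neg /(_ isT) le_pos.
apply/eqP; rewrite -subr_eq0; apply/eqP; lra.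
Qed.

End OptimalAllocation.

Theorem proposition6 (R : realType) (P U : finType)
  (mu sigma : P + U -> R)
  (hsigma : forall d, 0 < sigma d)
  (hmu_inj : injective mu)
  (hmu_sep : forall (p : P) (u : U), mu (inr u) < mu (inl p))
  (psi : P + U -> R) :
  optimal mu sigma psi ->
  exists z : R, 0 < z /\
  exists theta : P -> U -> bool,
    ((forall u : U, exists p : P, theta p u) /\
     (forall p : P, exists u : U, theta p u)) /\
    (forall d0 : P + U,
       \sum_(p : P | theta_relb theta d0 (inl p))
          (psi (inl p) / sigma (inl p)) ^+ 2
       = \sum_(u : U | theta_relb theta d0 (inr u))
          (psi (inr u) / sigma (inr u)) ^+ 2) /\
    (forall (p : P) (u : U),
       z <= Gfun mu sigma p u (psi (inl p)) (psi (inr u)) /\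
       (Gfun mu sigma p u (psi (inl p)) (psi (inr u)) = z <-> theta p u)).
Proof.
move=> psi_opt; have [p0 [u0 G_min]] := psi_opt.2 psi psi_opt.1.
have cover := tight_cover hsigma hmu_inj psi_opt G_min.
exists (Gfun mu sigma p0 u0 (psi (inl p0)) (psi (inr u0))).
split; first exact (min_value_gt0 hsigma hmu_inj psi_opt p0 u0).
exists (fun p u => Gfun mu sigma p u (psi (inl p)) (psi (inr u))
                   == Gfun mu sigma p0 u0 (psi (inl p0)) (psi (inr u0))).
split; [split|split].
- move=> u; have [p [u' [tight_pu' in_u]]] := cover (inr u).
  by move: in_u; rewrite /in_pair /= => /eqP[->]; exists p; apply/eqP.
- move=> p; have [p' [u [tight_p'u in_p]]] := cover (inl p).
  by move: in_p; rewrite /in_pair /= orbF => /eqP[->]; exists u; apply/eqP.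
- exact (class_balance hsigma hmu_inj psi_opt G_min).
- by move=> p u; split; [exact: G_min | split=> [->|/eqP]].
Qed.
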